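(* Let $V$ be a real Hilbert space, $\mathcal D$ a dictionary, $V_n\subset V$ a subspace of dimension $n$ with orthonormal basis $(\phi_1,\dots,\phi_n)$, and $\kappa\in(0,1)$. Let $(W_m)_{m\ge0}$ be generated by the collective OMP algorithm with parameter $\kappa$. If $J(V_n)<\infty$, then $$r_m\le\frac{J(V_n)^2}{\kappa^2}(m+1)^{-1}\qquad\text{for all } m\ge0.$$
   Context: A dictionary is a set $\mathcal D\subset V$ of elements with $\|\omega\|=1$ for all $\omega\in\mathcal D$ whose finite linear combinations are dense in $V$. Collective OMP: $W_0=\{0\}$; for $k\ge1$, choose $\omega_k\in\mathcal D$ with $$\sum_{i=1}^n|\langle\phi_i-P_{W_{k-1}}\phi_i,\omega_k\rangle|^2\ge\kappa^2\sup_{\omega\in\mathcal D}\sum_{i=1}^n|\langle\phi_i-P_{W_{k-1}}\phi_i,\omega\rangle|^2,$$ and set $W_k=\operatorname{span}\{\omega_1,\dots,\omega_k\}$ ($P_X$ is the orthogonal projection onto $X$). The residual is $r_m=\sum_{i=1}^n\|\phi_i-P_{W_m}\phi_i\|^2$. For $\Psi=(\psi_1,\dots,\psi_n)\in V^n$, $\|\Psi\|_{\ell^1(\mathcal D)}=\inf\{\sum_{\omega\in\mathcal D}\|c_\omega\|_2:\psi_i=\sum_{\omega\in\mathcal D}c_{\omega,i}\,\omega,\ i=1,\dots,n\}$ with $c_\omega\in\mathbb R^n$ (countably many nonzero; infimum of the empty set is $+\infty$), and $J(V_n)=\|(\phi_1,\dots,\phi_n)\|_{\ell^1(\mathcal D)}$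 for an orthonormal basis of $V_n$ (independent of the choice of basis). *)

From HB Require Import structures.
From mathcomp Require Import all_boot all_order all_algebra.
From mathcomp Require Import all_classical all_reals all_analysis.
Set Implicit Arguments. Unset Strict Implicit. Unset Printing Implicit Defensive.
Import Order.TTheory GRing.Theory Num.Theory numFieldNormedType.Exports.
Local Open Scope classical_set_scope.
Local Open Scope ring_scope.

Definition is_inner_product (R : realType) (V : completeNormedModType R)
  (ip : V -> V -> R) : Prop :=
  [/\ (forall x y, ip x y = ip y x),
      (forall x y z, ip (x + y) z = ip x z + ip y z),
      (forall (a : R) x y, ip (a *: x) y = a * ip x y) &
      (forall x, ip x x = `|x| ^+ 2)].

Definition lin_span (R : realType) (V : completeNormedModType R) (D : set V) : set V :=
  [set v | exists (k : nat) (w : 'I_k -> V) (c : 'I_k -> R),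
      (forall j, D (w j)) /\ v = \sum_(j < k) c j *: w j].

Definition is_dictionary (R : realType) (V : completeNormedModType R) (D : set V) : Prop :=
  (forall w, D w -> `|w| = 1) /\ closure (lin_span D) = setT.

(* W_k = span {omega 0, ..., omega (k-1)}  (omega 0 plays the role of omega_1) *)
Definition Wspan (R : realType) (V : completeNormedModType R) (omega : nat -> V) (k : nat)
  : set V :=
  [set v | exists c : 'I_k -> R, v = \sum_(j < k) c j *: omega j].

Definition is_proj (R : realType) (V : completeNormedModType R) (ip : V -> V -> R)
  (W : set V) (x p : V) : Prop :=
  W p /\ forall w, W w -> ip (x - p) w = 0.

Definition proj (R : realType) (V : completeNormedModType R) (ip : V -> V -> R)
  (W : set V) (x : V) : V := xget 0 [set p | is_proj ip W x p].

Definition greedy_crit (R : realType) (V : completeNormedModType R) (ip : V -> V -> R)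
  (n : nat) (phi : 'I_n -> V) (W : set V) (w : V) : R :=
  \sum_(i < n) `|ip (phi i - proj ip W (phi i)) w| ^+ 2.

(* collective OMP with parameter kappa: omega k is the (k+1)-th selected element *)
Definition collective_OMP (R : realType) (V : completeNormedModType R) (ip : V -> V -> R)
  (D : set V) (n : nat) (phi : 'I_n -> V) (kappa : R) (omega : nat -> V) : Prop :=
  forall k : nat, D (omega k) /\
    greedy_crit ip phi (Wspan omega k) (omega k) >=
    kappa ^+ 2 * sup [set greedy_crit ip phi (Wspan omega k) w | w in D].

Definition residual (R : realType) (V : completeNormedModType R) (ip : V -> V -> R)
  (n : nat) (phi : 'I_n -> V) (omega : nat -> V) (m : nat) : R :=
  \sum_(i < n) `|phi i - proj ip (Wspan omega m) (phi i)| ^+ 2.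

Definition norm2 (R : realType) (n : nat) (c : 'I_n -> R) : R :=
  Num.sqrt (\sum_(i < n) c i ^+ 2).

(* ell^1(D) norm of (psi_1,...,psi_n): inf of sum ||c_w||_2 over representations
   psi_i = sum_w c_{w,i} w with countably many nonzero terms, enumerated by a
   sequence (w_k) of dictionary elements (series converging in V). *)
Definition l1D_norm (R : realType) (V : completeNormedModType R) (D : set V)
  (n : nat) (psi : 'I_n -> V) : \bar R :=
  ereal_inf [set (\sum_(0 <= k <oo) (norm2 (c k))%:E)%E
            | c in [set c : nat -> 'I_n -> R | exists w : nat -> V,
                 (forall k, D (w k)) /\
                 forall i, (fun N => \sum_(0 <= k < N) c k i *: w k) @ \oo --> psi i]].

From Pilot Require Import Defs.
From HB Require Import structures.
From mathcomp Require Import all_boot all_order all_algebra.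
From mathcomp Require Import all_classical all_reals all_analysis.
From mathcomp Require Import ring lra.
Set Implicit Arguments. Unset Strict Implicit. Unset Printing Implicit Defensive.
Import Order.TTheory GRing.Theory Num.Theory numFieldNormedType.Exports.
Local Open Scope classical_set_scope.
Local Open Scope ring_scope.

(* Adding omega_k
   to W_k lowers the residual by at least F_k(omega_k).  Pairing the residuals
   phi_i - P_k phi_i with an l^1(D) representation phi_i = sum_w c_{w,i} w and
   using Cauchy-Schwarz in V and in R^n gives r_k <= J * sqrt (sup_w F_k(w)),
   hence r_k^2 <= J^2 F_k(omega_k) / kappa^2.  The recursion
   r_(k+1) <= r_k - kappa^2 r_k^2 / J^2 then forces r_m <= J^2 / (kappa^2 (m+1)). *)

Lemma quadratic_ge0_discr (R : realFieldType) (a b c : R) :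
  0 <= a -> (forall t, 0 <= a * t ^+ 2 - 2 * b * t + c) -> b ^+ 2 <= a * c.
Proof.
move=> a_ge0 q; have [a0|a_gt0] := eqVneq a 0.
  suff -> : b = 0 by rewrite a0 expr0n mul0r.
  apply/eqP; apply: contraT => b_neq0; have := q ((c + 1) / (2 * b)).
  have -> : a * ((c + 1) / (2 * b)) ^+ 2 - 2 * b * ((c + 1) / (2 * b)) + c = -1.
    by rewrite a0; field.
  by rewrite oppr_ge0 ler10.
have := q (b / a).
have -> : a * (b / a) ^+ 2 - 2 * b * (b / a) + c = (a * c - b ^+ 2) / a by field.
by rewrite pmulr_lge0 ?invr_gt0 ?lt_def ?a_gt0 // subr_ge0.
Qed.

Lemma sum_CauchySchwarz (R : rcfType) n (a b : 'I_n -> R) :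
  \sum_(i < n) a i * b i <=
    Num.sqrt (\sum_(i < n) a i ^+ 2) * Num.sqrt (\sum_(i < n) b i ^+ 2).
Proof.
have sqr_sum_ge0 (u : 'I_n -> R) : 0 <= \sum_(i < n) u i ^+ 2.
  by apply: sumr_ge0 => i _; apply: sqr_ge0.
rewrite -sqrtrM //; apply: le_trans (ler_norm _) _.
rewrite -sqrtr_sqr ler_wsqrtr // mulrC.
apply: quadratic_ge0_discr => // t.
suff -> : (\sum_(i < n) b i ^+ 2) * t ^+ 2 - 2 * (\sum_(i < n) a i * b i) * t
    + \sum_(i < n) a i ^+ 2 = \sum_(i < n) (a i - t * b i) ^+ 2 by [].
rewrite mulr_suml mulr_sumr mulr_suml -sumrB -big_split /=.
by apply: eq_bigr => i _; ring.
Qed.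

Section Span.
Variables (R : realType) (V : completeNormedModType R) (omega : nat -> V).
Local Notation W := (Wspan omega).

Lemma Wspan0 k : W k 0.
Proof. by exists (fun _ => 0); rewrite big1 // => j _; rewrite scale0r. Qed.

Lemma Wspan_nil v : W 0 v -> v = 0.
Proof. by move=> [c ->]; rewrite big_ord0. Qed.

Lemma WspanP k a x y : W k x -> W k y -> W k (a *: x + y).
Proof.
move=> [c ->] [d ->]; exists (fun j => a * c j + d j).
rewrite scaler_sumr -big_split /=; apply: eq_bigr => j _.
by rewrite scalerDl scalerA.
Qed.

Lemma WspanD k x y : W k x -> W k y -> W k (x + y).
Proof. by move=> Wx /(WspanP 1 Wx); rewrite scale1r. Qed.

Lemma WspanZ k a x : W k x -> W k (a *: x).
Proof. by move=> Wx; have := WspanP a Wx (Wspan0 k); rewrite addr0. Qed.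

Lemma WspanB k x y : W k x -> W k y -> W k (x - y).
Proof. by move=> Wx /(WspanZ (-1)); rewrite scaleN1r; apply: WspanD. Qed.

Lemma WspanS k x : W k x -> W k.+1 x.
Proof.
move=> [c ->]; exists (fun j : 'I_k.+1 => if unlift ord_max j is Some j' then c j' else 0).
rewrite big_ord_recr /= unlift_none scale0r addr0; apply: eq_bigr => j _.
have -> : widen_ord (leqnSn k) j = lift ord_max j.
  by apply: val_inj; rewrite /= /bump leqNgt ltn_ord.
by rewrite liftK.
Qed.

Lemma Wspan_last k : W k.+1 (omega k).
Proof.
exists (fun j : 'I_k.+1 => (j == ord_max)%:R).
rewrite big_ord_recr /= eqxx scale1r big1 ?add0r // => j _.
by rewrite -val_eqE /= ltn_eqF ?ltn_ord // scale0r.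
Qed.

Lemma WspanS_decomp k v :
  W k.+1 v -> exists w (c : R), W k w /\ v = w + c *: omega k.
Proof.
move=> [c ->]; rewrite big_ord_recr /=.
exists (\sum_(i < k) c (widen_ord (leqnSn k) i) *: omega i), (c ord_max).
by split=> //; exists (fun i => c (widen_ord (leqnSn k) i)).
Qed.

End Span.

Section InnerProduct.
Variables (R : realType) (V : completeNormedModType R) (ip : V -> V -> R).
Hypothesis ipP : is_inner_product ip.

Lemma ipC x y : ip x y = ip y x.
Proof. by case: ipP. Qed.

Lemma ipxx x : ip x x = `|x| ^+ 2.
Proof. by case: ipP. Qed.

Lemma ip_bilinear : bilinear_for *%R *%R ip.
Proof.
case: ipP => _ ipD ipZ _; split=> [u|u] a x y /=; rewrite ?ipD ?ipZ //.
by rewrite !(ipC u) ipD ipZ.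
Qed.

HB.instance Definition _ := bilinear_isBilinear.Build R V V R *%R *%R ip ip_bilinear.

Lemma sqr_normD x y : `|x + y| ^+ 2 = `|x| ^+ 2 + 2 * ip x y + `|y| ^+ 2.
Proof. by rewrite -!ipxx linearDl !linearDr /= (ipC y x); ring. Qed.

Lemma sqr_normB x y : `|x - y| ^+ 2 = `|x| ^+ 2 - 2 * ip x y + `|y| ^+ 2.
Proof. by rewrite sqr_normD normrN linearNr /=; ring. Qed.

Lemma ip_CauchySchwarz x y : ip x y ^+ 2 <= `|x| ^+ 2 * `|y| ^+ 2.
Proof.
rewrite mulrC; apply: quadratic_ge0_discr => [|t]; first exact: sqr_ge0.
have := sqr_ge0 `|x - t *: y|; rewrite sqr_normB normrZ linearZr /=.
by rewrite exprMn real_normK ?num_real //; lra.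
Qed.

Lemma ip_CauchySchwarz_norm x y : `|ip x y| <= `|x| * `|y|.
Proof.
rewrite -(@ler_pXn2r _ 2) ?nnegrE ?mulr_ge0 //.
by rewrite exprMn real_normK ?num_real // ip_CauchySchwarz.
Qed.

Lemma ip_cvgr z (f : nat -> V) y :
  f n @[n --> \oo] --> y -> ip z (f n) @[n --> \oo] --> ip z y.
Proof.
move=> /cvgrPdist_le fy; apply/cvgrPdist_le => e e_gt0.
have z1_gt0 : 0 < `|z| + 1 by rewrite ltr_wpDl.
apply: filterS (fy _ (divr_gt0 e_gt0 z1_gt0)) => N fyN.
rewrite -linearBr /=; apply: le_trans (ip_CauchySchwarz_norm _ _) _.
apply: le_trans (ler_wpM2l (normr_ge0 z) fyN) _.
by rewrite mulrCA ger_pMr // ler_pdivrMr // mul1r lerDl.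
Qed.

Section Projection.
Variable omega : nat -> V.
Local Notation W := (Wspan omega).
Local Notation P k := (Defs.proj ip (Wspan omega k)).

(* Gram-Schmidt: W_(k+1) = W_k + R u with u = omega_k - P_k omega_k orthogonal
   to W_k, so P_k x + t u is the projection onto W_(k+1) for t = <x - P_k x, u>/|u|^2. *)
Lemma proj_exists k x : exists p, is_proj ip (W k) x p.
Proof.
elim: k x => [|k IH] x.
  exists 0; split=> [|w /Wspan_nil ->]; [exact: Wspan0 | exact: linear0r].
have PkP y : is_proj ip (W k) y (P k y) := xgetPex 0 (IH y).
pose u := omega k - P k (omega k).
have [WPo u_orth] := PkP (omega k).
have Wk1_decomp w : W k.+1 w -> exists w' (c : R), W k w' /\ w = w' + c *: u.
  move=> /WspanS_decomp [w' [c [Ww' ->]]].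
  exists (w' + c *: P k (omega k)), c; split; first by apply: WspanD; last exact: WspanZ.
  by rewrite /u scalerBr (addrC (c *: omega k)) addrA addrK.
have [WPx r_orth] := PkP x; set r := x - P k x in r_orth.
pose t := ip r u / `|u| ^+ 2.
have tE : t * `|u| ^+ 2 = ip r u.
  have [->|u_neq0] := eqVneq u 0; first by rewrite linear0r normr0 expr0n mulr0.
  by rewrite divfK // expf_neq0 // normr_eq0.
exists (P k x + t *: u); split.
  by apply: WspanD; [exact: WspanS | apply/WspanZ/WspanB; [exact: Wspan_last | exact: WspanS]].
move=> _ /Wk1_decomp [w [c [Ww ->]]].
rewrite opprD addrA -/r linearDr linearZr /= [ip _ w]linearBl [ip _ u]linearBl /=.
by rewrite !linearZl /= r_orth // u_orth // ipxx tE; ring.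
Qed.

Lemma projP k x : is_proj ip (W k) x (P k x).
Proof. exact (xgetPex 0 (proj_exists k x)). Qed.

Lemma proj_min k x q : W k q -> `|x - P k x| ^+ 2 <= `|x - q| ^+ 2.
Proof.
move=> Wq; have [WPx orth] := projP k x.
have -> : x - q = (x - P k x) + (P k x - q) by rewrite addrA subrK.
rewrite [in X in _ <= X]sqr_normD orth ?mulr0 ?addr0 ?lerDl ?sqr_ge0 //.
exact: WspanB.
Qed.

Lemma sqr_norm_sub_proj k x : `|x - P k x| ^+ 2 = ip (x - P k x) x.
Proof.
have [WPx orth] := projP k x.
by rewrite -ipxx linearBr /= (orth _ WPx) subr0.
Qed.

Section Residual.
Variables (n : nat) (phi : 'I_n -> V).
Local Notation F k := (greedy_crit ip phi (W k)).
Local Notation r k := (residual ip phi omega k).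

Lemma greedy_crit_ge0 k w : 0 <= F k w.
Proof. by apply: sumr_ge0 => i _; apply: sqr_ge0. Qed.

Lemma greedy_crit_le_residual k w : `|w| = 1 -> F k w <= r k.
Proof.
move=> w1; apply: ler_sum => i _.
by rewrite real_normK ?num_real // (le_trans (ip_CauchySchwarz _ _)) // w1 expr1n mulr1.
Qed.

Lemma residualS_le k : `|omega k| = 1 -> r k.+1 <= r k - F k (omega k).
Proof.
move=> w1; rewrite /residual /greedy_crit -sumrB; apply: ler_sum => i _.
set x := phi i; set t := ip (x - P k x) (omega k).
have Wq : W k.+1 (P k x + t *: omega k).
  by apply: WspanD; [apply/WspanS; case: (projP k x) | apply/WspanZ/Wspan_last].
apply: le_trans (proj_min x Wq) _.
rewrite opprD addrA sqr_normB linearZr normrZ w1 mulr1 real_normK ?num_real //= -/t.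
lra.
Qed.

Lemma residual_ip k : r k = \sum_(i < n) ip (phi i - P k (phi i)) (phi i).
Proof. by apply: eq_bigr => i _; rewrite sqr_norm_sub_proj. Qed.

Section Dictionary.
Variable D : set V.
Hypothesis D_unit : forall w, D w -> `|w| = 1.
Local Notation S k := (sup [set F k w | w in D]).
Local Notation J := (l1D_norm D phi).

Lemma greedy_crit_ubound k : has_ubound [set F k w | w in D].
Proof. by exists (r k) => _ [w Dw <-]; apply/greedy_crit_le_residual/D_unit. Qed.

Lemma sup_greedy_crit_ge0 k : 0 <= S k.
Proof.
have [->|/set0P [_ [w Dw _]]] := eqVneq [set F k w | w in D] set0; first by rewrite sup0.
apply: (le_trans (greedy_crit_ge0 k w)); apply: ub_le_sup; last by exists w.
exact: greedy_crit_ubound.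
Qed.

Lemma residual_pairing_le k (c : nat -> 'I_n -> R) (w : nat -> V) N :
  (forall j, D (w j)) ->
  \sum_(i < n) ip (phi i - P k (phi i)) (\sum_(0 <= j < N) c j i *: w j)
    <= Num.sqrt (S k) * \sum_(0 <= j < N) norm2 (c j).
Proof.
move=> Dw; under eq_bigr do rewrite linear_sumr.
rewrite exchange_big mulr_sumr; apply: ler_sum => j _.
under eq_bigr do rewrite linearZr /=.
apply: le_trans (sum_CauchySchwarz _ _) _; rewrite mulrC ler_wpM2r ?sqrtr_ge0 //.
have Fw_le : F k (w j) <= S k by apply: ub_le_sup (greedy_crit_ubound k) _ _; exists (w j).
apply: ler_wsqrtr; apply: le_trans Fw_le; rewrite le_eqVlt; apply/orP; left.
by apply/eqP/eq_bigr => i _; rewrite real_normK ?num_real.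
Qed.

Lemma residual_pairing_cvg k (c : nat -> 'I_n -> R) (w : nat -> V) :
  (forall i, (\sum_(0 <= j < N) c j i *: w j) @[N --> \oo] --> phi i) ->
  (\sum_(i < n) ip (phi i - P k (phi i)) (\sum_(0 <= j < N) c j i *: w j))
    @[N --> \oo] --> r k.
Proof.
move=> cv; rewrite residual_ip.
by apply: (@cvg_big _ _ +%R 0 xpredT add_continuous) => i _; apply/ip_cvgr/cv.
Qed.

Lemma residual_le_repr k (c : nat -> 'I_n -> R) (w : nat -> V) b :
  (forall j, D (w j)) ->
  (forall i, (\sum_(0 <= j < N) c j i *: w j) @[N --> \oo] --> phi i) ->
  (\sum_(0 <= j <oo) (norm2 (c j))%:E <= b%:E)%E ->
  r k <= Num.sqrt (S k) * b.
Proof.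
move=> Dw cv sum_le; apply: (cvgr_to_le (residual_pairing_cvg cv)); apply: nearW => N.
apply: le_trans (residual_pairing_le k c N Dw) _; rewrite ler_wpM2l ?sqrtr_ge0 //.
rewrite -lee_fin -sumEFin; apply: le_trans sum_le.
by apply: nneseries_lim_ge => j _ _; rewrite lee_fin sqrtr_ge0.
Qed.

Lemma residual_le_l1D k : (J < +oo)%E -> r k <= Num.sqrt (S k) * fine J.
Proof.
move=> J_lt; set s := Num.sqrt (S k); have s_ge0 : 0 <= s := sqrtr_ge0 _.
have le_delta d : 0 < d -> r k <= s * (fine J + d).
  move=> d_gt0; have : (J < (fine J + d)%:E)%E.
    by move: J_lt; case: (l1D_norm D phi) => [x| |] //= _; rewrite ?lte_fin ?ltrDl ?ltNyr.
  move=> /ereal_inf_lt [_ [c [w [Dw cv]] <-] lt_sum].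
  by apply: (residual_le_repr k Dw cv); apply: ltW.
apply/ler_addgt0Pr => e e_gt0; have s1_gt0 : 0 < s + 1 by rewrite ltr_wpDl.
apply: le_trans (le_delta _ (divr_gt0 e_gt0 s1_gt0)) _.
by rewrite mulrDr lerD2l mulrCA ger_pMr // ler_pdivrMr // mul1r lerDl.
Qed.

Lemma sqr_residual_le k : (J < +oo)%E -> r k ^+ 2 <= fine J ^+ 2 * S k.
Proof.
move=> J_lt; have r_ge0 : 0 <= r k by apply: sumr_ge0 => i _; apply: sqr_ge0.
have r_le := residual_le_l1D k J_lt.
rewrite mulrC -[S k]sqr_sqrtr ?sup_greedy_crit_ge0 // -exprMn.
by rewrite ler_pXn2r ?nnegrE // (le_trans r_ge0).
Qed.

End Dictionary.
End Residual.
End Projection.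
End InnerProduct.

Lemma harmonic_decay_step (R : realFieldType) (A K x y f : R) :
  0 <= A -> 0 < K -> 0 <= f -> K * x <= A -> x ^+ 2 <= A * f -> y <= x - f ->
  (K + 1) * y <= A.
Proof.
move=> A_ge0 K_gt0 f_ge0 Kx_le x2_le y_le.
have [K1x_le|A_lt] := leP ((K + 1) * x) A; first by nra.
have x_gt0 : 0 < x by nra.
have x_le : x <= (K + 1) * f by rewrite -(ler_pM2l x_gt0); nra.
nra.
Qed.

Lemma harmonic_decay (R : realFieldType) (A : R) (a f : nat -> R) :
  0 <= A -> (forall k, 0 <= f k) -> (forall k, f k <= a k) ->
  (forall k, a k ^+ 2 <= A * f k) -> (forall k, a k.+1 <= a k - f k) ->
  forall m, a m <= A * (m.+1%:R)^-1.
Proof.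
move=> A_ge0 f_ge0 f_le a2_le a_dec m; rewrite mulrC ler_pdivlMl ?ltr0Sn //.
elim: m => [|m IH].
  by rewrite mul1r; have := a2_le 0%N; have := f_le 0%N; have := f_ge0 0%N; nra.
by rewrite -natr1; apply: harmonic_decay_step (f_ge0 m) IH (a2_le m) (a_dec m).
Qed.

Theorem theorem1 (R : realType) (V : completeNormedModType R) (ip : V -> V -> R)
  (D : set V) (n : nat) (phi : 'I_n -> V) (kappa : R) (omega : nat -> V) :
  is_inner_product ip ->
  is_dictionary D ->
  (forall i j : 'I_n, ip (phi i) (phi j) = (i == j)%:R) ->
  0 < kappa < 1 ->
  collective_OMP ip D phi kappa omega ->
  (l1D_norm D phi < +oo)%E ->
  forall m : nat,
    residual ip phi omega m <=
      (fine (l1D_norm D phi)) ^+ 2 / kappa ^+ 2 * (m.+1%:R)^-1.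
Proof.
move=> ipP [D_unit _] _ /andP[kappa_gt0 _] omp J_lt m.
have omega_unit k : `|omega k| = 1 by apply: D_unit; case: (omp k).
apply: (@harmonic_decay _ _ _ (fun k => greedy_crit ip phi (Wspan omega k) (omega k))).
- by rewrite divr_ge0 ?sqr_ge0.
- by move=> k; apply: greedy_crit_ge0.
- by move=> k; apply: greedy_crit_le_residual.
- move=> k; have [_ crit_ge] := omp k.
  apply: (le_trans (sqr_residual_le ipP omega D_unit k J_lt)).
  by rewrite -[X in _ <= X]mulrA ler_wpM2l ?sqr_ge0 // ler_pdivlMl ?exprn_gt0.
- by move=> k; apply: residualS_le.
Qed.
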